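(* Let $X$ be a topological space, $\mathcal{C}$ the set of its closed sets, and $\mathcal{A}\subseteq\mathcal{C}$. The following are equivalent: (i) the crisp context $(X,\mathcal{A},\in)$ is a reduct of $(X,\mathcal{C},\in)$ in FCA; (ii) the crisp context $(X,\mathcal{A},\notin)$ is a reduct of $(X,\mathcal{C},\notin)$ in RST; (iii) $\mathcal{A}$ is a base for the closed sets of $X$, i.e. every $C\in\mathcal{C}$ equals $\bigcap\mathcal{A}'$ for some $\mathcal{A}'\subseteq\mathcal{A}$ (with $\bigcap\emptyset=X$).
   Context: Crisp contexts are $L$-contexts for $L=\{0,1\}$ with $*=\wedge$; a context is a triple $(X,Y,R)$ with $R\subseteq X\times Y$, and subsets are identified with $\{0,1\}$-valued maps. $(X,\mathcal{C},\in)$ has relation $\{(x,C)\mid x\in C\}$ and $\notin$ is its complement. For $U\subseteq X$, $V\subseteq Y$: $R^\uparrow U=\{y\mid\forall x\in U,(x,y)\in R\}$, $R^\downarrow V=\{x\mid\forall y\in V,(x,y)\in R\}$, $R^\exists U=\{y\mid\exists x\in U,(x,y)\in R\}$, $R^\forall V=\{x\mid\forall y,(x,y)\in R\Rightarrow y\in V\}$. $\mathcal{M}R=\{U\mid R^\downarrow R^\uparrow U=U\}$, $\mathcal{K}R=\{U\mid R^\forall R^\exists U=U\}$. For $X'\subseteq X$, $Y'\subseteq Y$, $R_{X',Y'}=R\cap(X'\times Y')$. $(X',Y',R_{X',Y'})$ is a reduct of $(X,Y,R)$ in FCA if the map $\mathcal{M}R_{X',Y'}\to\mathcal{M}R$,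 $U'\mapsto R^\downarrow R^\uparrow U'$, is an order isomorphism (for inclusion); it is a reduct in RST if the map $\mathcal{K}R_{X',Y'}\to\mathcal{K}R$, $U'\mapsto R^\forall R^\exists U'$, is an order isomorphism. *)

From mathcomp Require Import all_boot all_order.
From mathcomp Require Import boolp classical_sets topology.
Set Implicit Arguments. Unset Strict Implicit. Unset Printing Implicit Defensive.
Local Open Scope classical_set_scope.

(* A crisp context (X', Y', R restricted to X' x Y') is represented by its
   carrier sets X' : set X, Y' : set Y inside ambient types X, Y and a
   relation R : X -> Y -> Prop; subsets of X' are sets U : set X with U `<=` X'. *)
Definition cup (X Y : Type) (Xc : set X) (Yc : set Y) (R : X -> Y -> Prop)
  (U : set X) : set Y := [set y | Yc y /\ forall x, U x -> R x y].
Definition cdown (X Y : Type) (Xc : set X) (Yc : set Y) (R : X -> Y -> Prop)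
  (V : set Y) : set X := [set x | Xc x /\ forall y, V y -> R x y].
Definition cex (X Y : Type) (Xc : set X) (Yc : set Y) (R : X -> Y -> Prop)
  (U : set X) : set Y := [set y | Yc y /\ exists2 x, U x & R x y].
Definition call (X Y : Type) (Xc : set X) (Yc : set Y) (R : X -> Y -> Prop)
  (V : set Y) : set X := [set x | Xc x /\ forall y, Yc y -> R x y -> V y].

Definition cM (X Y : Type) (Xc : set X) (Yc : set Y) (R : X -> Y -> Prop)
  : set (set X) := [set U | U `<=` Xc /\ cdown Xc Yc R (cup Xc Yc R U) = U].
Definition cK (X Y : Type) (Xc : set X) (Yc : set Y) (R : X -> Y -> Prop)
  : set (set X) := [set U | U `<=` Xc /\ call Xc Yc R (cex Xc Yc R U) = U].

Definition order_iso (X : Type) (A B : set (set X)) (f : set X -> set X) :=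
  [/\ forall U, A U -> B (f U),
      forall U V, A U -> A V -> (U `<=` V <-> f U `<=` f V),
      forall U V, A U -> A V -> f U = f V -> U = V
    & forall W, B W -> exists2 U, A U & f U = W].

Definition reduct_FCA (X Y : Type) (X' : set X) (Y' : set Y)
    (Xc : set X) (Yc : set Y) (R : X -> Y -> Prop) :=
  order_iso (cM X' Y' R) (cM Xc Yc R)
            (fun U => cdown Xc Yc R (cup Xc Yc R U)).

Definition reduct_RST (X Y : Type) (X' : set X) (Y' : set Y)
    (Xc : set X) (Yc : set Y) (R : X -> Y -> Prop) :=
  order_iso (cK X' Y' R) (cK Xc Yc R)
            (fun U => call Xc Yc R (cex Xc Yc R U)).

Definition mem_rel (X : Type) : X -> set X -> Prop := fun x C => C x.
Definition nmem_rel (X : Type) : X -> set X -> Prop := fun x C => ~ C x.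

From mathcomp Require Import all_boot all_order.
From mathcomp Require Import boolp classical_sets topology.
Local Open Scope classical_set_scope.

(* With all of X as object set, both Galois connections (cup/cdown for
   membership, cex/call for non-membership) induce the same hull operator
   [smallest Y]: the intersection of all attributes containing a set.  Hence
   both reduct conditions say that the hull operators generated by A and by
   the closed sets have the same fixed points.  The fixed points
   of [smallest A] are exactly the intersections of subfamilies of A, and
   when A consists of closed sets these are closed, so the condition reads:
   every closed set is an intersection of members of A. *)

Section HullOperator.
Variables (T : Type) (Y : set (set T)).

Lemma cdown_cup_mem (U : set T) :
  cdown setT Y (@mem_rel T) (cup setT Y (@mem_rel T) U) = smallest Y U.
Proof.
apply/seteqP; split => x /=.
- by move=> [_ UY] C [YC UC]; exact: UY.
- by move=> Ux; split => // C [YC UC]; exact: Ux.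
Qed.

Lemma call_cex_nmem (U : set T) :
  call setT Y (@nmem_rel T) (cex setT Y (@nmem_rel T) U) = smallest Y U.
Proof.
apply/seteqP; split => x /=.
- move=> [_ Ux] C [YC UC]; apply: contrapT => nCx.
  by have [_ [y /UC Cy]] := Ux C YC nCx.
- move=> Ux; split => // C YC nCx; split => //.
  apply: contrapT => nex; apply: nCx; apply: Ux; split => // y Uy.
  by apply: contrapT => nCy; apply: nex; exists y.
Qed.

Lemma cM_mem : cM setT Y (@mem_rel T) = [set U | smallest Y U = U].
Proof.
rewrite /cM; under eq_fun do rewrite cdown_cup_mem.
by apply/seteqP; split => U /= => [[] | ].
Qed.

Lemma cK_nmem : cK setT Y (@nmem_rel T) = [set U | smallest Y U = U].
Proof.
rewrite /cK; under eq_fun do rewrite call_cex_nmem.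
by apply/seteqP; split => U /= => [[] | ].
Qed.

Lemma smallest_fixed_bigcap (U : set T) :
  smallest Y U = U <-> exists2 Y', Y' `<=` Y & U = \bigcap_(B in Y') B.
Proof.
split=> [UY | [Y' Y'Y ->]].
  by exists [set B | Y B /\ U `<=` B] => [B []|].
apply/seteqP; split; last exact: sub_gen_smallest.
by move=> x Ux B Y'B; apply: Ux; split; [exact: Y'Y | exact: bigcap_inf].
Qed.

End HullOperator.

Lemma reduct_FCA_memE (T : Type) (A Y : set (set T)) :
  reduct_FCA setT A setT Y (@mem_rel T) =
  order_iso [set U | smallest A U = U] [set U | smallest Y U = U] (smallest Y).
Proof.
rewrite /reduct_FCA !cM_mem; congr order_iso.
by apply: funext => U; exact: cdown_cup_mem.
Qed.

Lemma reduct_RST_nmemE (T : Type) (A Y : set (set T)) :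
  reduct_RST setT A setT Y (@nmem_rel T) =
  order_iso [set U | smallest A U = U] [set U | smallest Y U = U] (smallest Y).
Proof.
rewrite /reduct_RST !cK_nmem; congr order_iso.
by apply: funext => U; exact: call_cex_nmem.
Qed.

Lemma order_iso_idP (T : Type) (F G : set (set T)) (f : set T -> set T) :
  F `<=` G -> (forall U, F U -> f U = U) -> order_iso F G f <-> G `<=` F.
Proof.
move=> FG fid; split=> [[_ _ _ fsurj] W /fsurj [U FU <-] | GF].
  by rewrite fid.
split=> [U FU | U V FU FV | U V FU FV | W GW]; rewrite ?fid //.
- exact: FG.
- by exists W; [exact: GF | exact: fid (GF _ GW)].
Qed.

Lemma smallest_fixed_closed {X : topologicalType} {A : set (set X)} :
  A `<=` [set C | closed C] ->
  [set U | smallest A U = U] `<=` [set C | closed C].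
Proof. by move=> Acl U <-; apply: closed_bigI => C [/Acl]. Qed.

Lemma smallest_closed_fixedE (X : topologicalType) :
  [set U | smallest [set C | closed C] U = U] = [set C : set X | closed C].
Proof.
apply/seteqP; split=> U /=; rewrite -closureE.
- by move=> <-; exact: closed_closure.
- by move=> /closure_id.
Qed.

Theorem mainTheorem10 (X : topologicalType) (A : set (set X))
  (hA : A `<=` [set C | closed C]) :
  [<-> reduct_FCA setT A setT [set C | closed C] (@mem_rel X);
       reduct_RST setT A setT [set C | closed C] (@nmem_rel X);
       forall C : set X, closed C ->
         exists2 A' : set (set X), A' `<=` A & C = \bigcap_(B in A') B].
Proof.
rewrite reduct_RST_nmemE reduct_FCA_memE smallest_closed_fixedE.
have iso_base : order_iso [set U | smallest A U = U]
    [set C | closed C] (smallest [set C | closed C]) <->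
    [set C | closed C] `<=` [set U | smallest A U = U].
  apply: order_iso_idP; first exact: smallest_fixed_closed hA.
  by move=> U /(smallest_fixed_closed hA) /smallest_id.
split; first by [].
split=> [/iso_base base C /base /smallest_fixed_bigcap // | base].
by apply/iso_base => C /base /smallest_fixed_bigcap.
Qed.
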